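(* Let $\boldsymbol\mu>\mathbf 0$ and assume $\mathbf I-\mathbf G$ is irreducible for every $\mathbf G\in\mathcal G(\boldsymbol\mu)$. Define $\beta^*(\boldsymbol\mu)=1/\max_{\mathbf G\in\mathcal G(\boldsymbol\mu)}\lambda(\mathbf I-\mathbf G)$. Then for $\beta>0$, there exists $\mathbf p\geq\mathbf 0$ with $\mathbf A(\beta\boldsymbol\mu)\mathbf p\geq\mathbf n(\beta\boldsymbol\mu)$ if and only if $\beta<\beta^*(\boldsymbol\mu)$; in particular $\sup\{\beta>0:\exists\,\mathbf p\geq\mathbf 0,\ \mathbf A(\beta\boldsymbol\mu)\mathbf p\geq\mathbf n(\beta\boldsymbol\mu)\}=\beta^*(\boldsymbol\mu)$.
   Context: Multicast system: $N$ transmitters; transmitter $T_i$ has $K_i\geq1$ receivers $R_i^{k}$, $k\in\mathcal K_i=\{1,\dots,K_i\}$. Channel gains $g_{r_i^{k},t_j}\geq 0$ (from $T_j$ to $R_i^k$) with $g_{r_i^{k},t_i}>0$; noise variance $\sigma^2>0$. For $\boldsymbol\mu\in\mathbb R^N$, $\mathbf a_i^{k}(\boldsymbol\mu)\in\mathbb R^{1\times N}$ is the row vector with $i$-th entry $1$ and $j$-th entry $-\mu_i g_{r_i^{k},t_j}/g_{r_i^{k},t_i}$ for $j\neq i$; $n_i^{k}(\boldsymbol\mu)=\mu_i\sigma^2/g_{r_i^{k},t_i}$. $\mathbf A(\boldsymbol\mu)$ stacks all rows $\mathbf a_i^{k}(\boldsymbol\mu)$, $\mathbf n(\boldsymbol\mu)$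 stacks the corresponding $n_i^k(\boldsymbol\mu)$. $\mathcal G(\boldsymbol\mu)$ is the set of $N\times N$ matrices whose $i$-th row is $\mathbf a_i^{k_i}(\boldsymbol\mu)$ for a choice $k_i\in\mathcal K_i$. $\lambda(\cdot)$ is the Perron–Frobenius eigenvalue (spectral radius). *)

(* Scalars live in a numeric closed field C (e.g. the complex
   numbers); all data (gains, noise, mu, beta, p) are required to be >= 0 or > 0,
   hence real.  Complex scalars are needed only to speak about eigenvalues. *)
From HB Require Import structures.
From mathcomp Require Import all_boot all_order all_algebra.
Set Implicit Arguments. Unset Strict Implicit. Unset Printing Implicit Defensive.
Import Order.TTheory GRing.Theory Num.Theory.
Local Open Scope ring_scope.

Section Defs.
Variable C : numClosedFieldType.
Variable N : nat.
Variable K : 'I_N -> nat.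
(* g i k j = g_{r_i^k, t_j}, the gain from T_j to receiver R_i^k *)
Variable g : forall i : 'I_N, 'I_(K i) -> 'I_N -> C.

Definition arow (mu : 'I_N -> C) (i : 'I_N) (k : 'I_(K i)) (j : 'I_N) : C :=
  if j == i then 1 else - (mu i * g k j / g k i).

Definition nvec (sigma2 : C) (mu : 'I_N -> C) (i : 'I_N) (k : 'I_(K i)) : C :=
  mu i * sigma2 / g k i.

(* A(mu) p >= n(mu), written row by row (one row per receiver R_i^k) *)
Definition feasible (sigma2 : C) (mu : 'I_N -> C) (p : 'I_N -> C) : Prop :=
  forall (i : 'I_N) (k : 'I_(K i)),
    nvec sigma2 mu k <= \sum_(j < N) arow mu k j * p j.

Definition choice_t := {dffun forall i : 'I_N, 'I_(K i)}.

(* the element of G(mu) determined by a choice c *)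
Definition Gmat (mu : 'I_N -> C) (c : choice_t) : 'M[C]_N :=
  \matrix_(i < N, j < N) arow mu (c i) j.
End Defs.

(* irreducibility of a nonnegative square matrix (Horn--Johnson): its
   directed graph is strongly connected, i.e. for all i j some positive power
   has a positive (i,j) entry. *)
Definition irreducible_mx (C : numDomainType) (n : nat) (M : 'M[C]_n) : Prop :=
  forall i j : 'I_n, exists k : nat, (0 < k)%N /\ 0 < (M ^+ k) i j.

Definition maxr (C : numDomainType) (x y : C) : C := if x <= y then y else x.

Definition specrad (C : numClosedFieldType) (n : nat) (M : 'M[C]_n) : C :=
  \big[@maxr C/0]_(z <- sval (closed_field_poly_normal (char_poly M))) `|z|.

Definition beta_star (C : numClosedFieldType) (N : nat) (K : 'I_N -> nat)
  (g : forall i : 'I_N, 'I_(K i) -> 'I_N -> C) (mu : 'I_N -> C) : C :=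
  1 / \big[@maxr C/0]_(c : choice_t K) specrad (1%:M - Gmat g mu c).

Definition is_sup (C : numDomainType) (S : C -> Prop) (s : C) : Prop :=
  (forall b, S b -> b <= s) /\ (forall u, (forall b, S b -> b <= u) -> s <= u).

From HB Require Import structures.
From mathcomp Require Import all_boot all_order all_algebra.
Set Implicit Arguments. Unset Strict Implicit. Unset Printing Implicit Defensive.
Import Order.TTheory GRing.Theory Num.Theory.
Local Open Scope ring_scope.

(* Fix a choice [c] of one receiver per transmitter.  The rows of the
   constraint [A(beta mu) p >= n(beta mu)] selected by [c] read
   [p >= beta F_c p + beta eta_c] with [F_c = I - G_c] nonnegative irreducible
   and [eta_c > 0].  A feasible [p] is thus positive and strictly subinvariant
   for [beta F_c], which bounds the spectral radius of [F_c] by [1 / beta]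
   (Collatz--Wielandt); hence [beta < beta^*].  Conversely, if
   [beta lambda(F_c) < 1] for every [c], then [(I - beta F_c)^-1] is entrywise
   positive, so [p_c = (I - beta F_c)^-1 beta eta_c >= 0]; a choice maximizing
   the total power [sum_i (p_c)_i] satisfies every row of the constraint, since
   switching to a violated row would strictly increase that total (policy
   improvement). *)

Local Notation roots p := (sval (closed_field_poly_normal p)).

Section RealMaxima.
Variable C : numClosedFieldType.

Lemma real_seq_max (s : seq C) x0 : all (fun x => x \is Num.real) (x0 :: s) ->
  exists2 m, m \in x0 :: s & forall y, y \in x0 :: s -> y <= m.
Proof.
elim: s x0 => [|y s IH] x0; first by exists x0 => [|z]; rewrite ?inE // => /eqP ->.
move=> /andP [x0r ys_real]; have [m ms mP] := IH y ys_real.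
have mr : m \is Num.real := allP (ys_real : all _ (y :: s)) m ms.
have [x0m | mx0] := real_leP x0r mr.
  exists m => [|z]; first by rewrite inE ms orbT.
  by rewrite inE => /predU1P [-> | /mP].
exists x0 => [|z]; first exact: mem_head.
by rewrite inE => /predU1P [-> // | /mP zm]; rewrite (le_trans zm) // ltW.
Qed.

Lemma real_fin_argmax (I : finType) (i0 : I) (r : I -> C) :
  (forall i, r i \is Num.real) -> exists m, forall i, r i <= r m.
Proof.
move=> r_real.
have [|m] := @real_seq_max [seq r i | i <- enum I] (r i0).
  by apply/allP => x /predU1P [-> | /mapP [i _ ->]].
have rI i : r i \in r i0 :: [seq r i | i <- enum I].
  by rewrite inE map_f ?mem_enum ?orbT.
by move=> /predU1P [-> | /mapP [i _ ->]] mP; [exists i0 | exists i] => j; apply: mP.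
Qed.

Lemma real_fin_argmin (I : finType) (i0 : I) (r : I -> C) :
  (forall i, r i \is Num.real) -> exists m, forall i, r m <= r i.
Proof.
move=> r_real; have [|m mP] := @real_fin_argmax I i0 (fun i => - r i).
  by move=> i; rewrite rpredN.
by exists m => i; rewrite -lerN2.
Qed.

Lemma maxr_real (x y : C) : x \is Num.real -> y \is Num.real -> maxr x y \is Num.real.
Proof. by rewrite /maxr; case: ifP. Qed.

Lemma le_maxr (x y : C) : x \is Num.real -> y \is Num.real ->
  (x <= maxr x y) && (y <= maxr x y).
Proof.
move=> xr yr; rewrite /maxr; case: ifP => [->|/negbT]; rewrite ?lexx //.
by rewrite -real_ltNge // => /ltW ->.
Qed.

Section BigMaxr.
Variables (I : eqType) (F : I -> C).
Hypothesis F_real : forall i, F i \is Num.real.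

Lemma bigmaxr_real (r : seq I) : \big[@maxr C/0]_(i <- r) F i \is Num.real.
Proof. by elim: r => [|i r IH]; rewrite ?big_nil ?real0 // big_cons maxr_real. Qed.

Lemma le_bigmaxr (r : seq I) i : i \in r -> F i <= \big[@maxr C/0]_(i <- r) F i.
Proof.
elim: r => [|j r IH] //; rewrite inE big_cons.
have /andP [Fj_le r_le] := le_maxr (F_real j) (bigmaxr_real r).
by move=> /predU1P [-> // | /IH]; move/le_trans; apply.
Qed.

End BigMaxr.

Lemma bigmaxr_lt (I : eqType) (r : seq I) (F : I -> C) B : 0 < B ->
  (forall i, i \in r -> F i < B) -> \big[@maxr C/0]_(i <- r) F i < B.
Proof.
move=> B0; elim: r => [|j r IH] FB; rewrite ?big_nil // big_cons /maxr.
case: ifP => _; last by rewrite FB ?mem_head.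
by apply: IH => i ir; rewrite FB // inE ir orbT.
Qed.

End RealMaxima.

Section ConjInvariantPolynomials.
Variable C : numClosedFieldType.
Implicit Types (p q : {poly C}) (a b x z : C).

Lemma roots_normalE p : p = lead_coef p *: \prod_(z <- roots p) ('X - z%:P).
Proof. exact: svalP (closed_field_poly_normal p). Qed.

Lemma mem_roots p z : p != 0 -> (z \in roots p) = root p z.
Proof.
move=> p0; rewrite [in RHS](roots_normalE p) /root hornerZ mulf_eq0.
by rewrite lead_coef_eq0 (negPf p0) -/(root _ z) root_prod_XsubC.
Qed.

Lemma horner_roots p x : p.[x] = lead_coef p * \prod_(z <- roots p) (x - z).
Proof.
rewrite {1}(roots_normalE p) hornerZ horner_prod; congr (_ * _).
by apply: eq_bigr => z _; rewrite hornerXsubC.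
Qed.

Lemma horner_conj_real p x : map_poly Num.conj p = p -> x \is Num.real ->
  p.[x] \is Num.real.
Proof. by move=> pc xr; apply/CrealP; rewrite -horner_map /= pc conj_Creal. Qed.

Lemma prod_sub_real_roots_ge0 (rs : seq C) a b : a \is Num.real -> a < b ->
  all (fun z => (z \is Num.real) && ~~ (a < z < b)) rs ->
  0 <= \prod_(z <- rs) ((a - z) * (b - z)).
Proof.
move=> ar ab /allP rsP; rewrite big_seq; apply: prodr_ge0 => z /rsP /andP [zr].
have br : b \is Num.real by rewrite -(ler_real (ltW ab)).
have [za | az] := real_leP zr ar.
  by rewrite mulr_ge0 // subr_ge0 // (le_trans za (ltW ab)).
by rewrite -real_leNgt // => bz; rewrite mulr_le0 // subr_le0 // ltW.
Qed.

Lemma horner_conj_pair_gt0 z x : z \isn't Num.real -> x \is Num.real ->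
  0 < (('X - (z^*)%:P) * ('X - z%:P)).[x].
Proof.
move=> zr xr; rewrite hornerM !hornerXsubC.
have -> : x - z^* = (x - z)^* by rewrite rmorphB /= (conj_Creal xr).
by rewrite mulrC mul_conjC_gt0 subr_eq0; apply: contraNneq zr => <-.
Qed.

Lemma conj_poly_pair_factor p z : map_poly Num.conj p = p -> root p z ->
  z \isn't Num.real ->
  exists2 q, map_poly Num.conj q = q & p = q * (('X - (z^*)%:P) * ('X - z%:P)).
Proof.
move=> pc pz zr; set d := _ * _.
have zcz : z^* != z by rewrite -CrealE.
have pzc : root p z^* by rewrite /root -{1}pc horner_map /= (eqP pz) rmorph0.
have [q1 pq1] := factor_theorem _ _ pz.
have q1zc : root q1 z^*.
  by move: pzc; rewrite pq1 rootM root_XsubC (negPf zcz) orbF.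
have [q q1q] := factor_theorem _ _ q1zc.
exists q; last by rewrite pq1 q1q /d mulrA.
have dc : map_poly Num.conj d = d.
  by rewrite /d rmorphM /= !map_polyXsubC /= conjCK mulrC.
have d0 : d != 0 by rewrite mulf_neq0 // polyXsubC_eq0.
by apply: (mulIf d0); rewrite -{1}dc -rmorphM /= /d mulrA -q1q -pq1 pc.
Qed.

Lemma conj_poly_ivt p a b : map_poly Num.conj p = p -> a \is Num.real -> a < b ->
  p.[a] * p.[b] < 0 -> exists2 r, a < r < b & root p r.
Proof.
move=> + ar ab; have [n] := ubnP (size p); elim: n p => [|n IH] p; first by rewrite ltn0.
move=> /ltnSE sz pc sgn.
have p0 : p != 0 by apply: contraTneq sgn => ->; rewrite !horner0 mul0r ltxx.
have [/hasP [r rs /andP [ar' rb]] | no_root] := boolP (has (fun z => a < z < b) (roots p)).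
  by exists r; rewrite ?ar' // -mem_roots.
have [all_real | /allPn [z zs zr]] := boolP (all (fun z => z \is Num.real) (roots p)).
  move: sgn; rewrite (horner_roots p a) (horner_roots p b) mulrACA -big_split /=.
  suff prod_ge0 : 0 <= lead_coef p * lead_coef p * \prod_(z <- roots p) ((a - z) * (b - z)).
    by move/lt_le_trans/(_ prod_ge0); rewrite ltxx.
  rewrite mulr_ge0 ?prod_sub_real_roots_ge0 // -?expr2 ?real_exprn_even_ge0 //.
    by apply/CrealP; rewrite -lead_coef_map pc.
  by apply/allP => z zs; rewrite (allP all_real) //= (hasPn no_root).
have pz : root p z by rewrite -mem_roots.
have [q qc pq] := conj_poly_pair_factor pc pz zr.
have q0 : q != 0 by apply: contraNneq p0 => q0; rewrite pq q0 mul0r.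
have [|||r rab qr] := IH q; rewrite ?qc //.
- apply: leq_trans sz; rewrite pq size_mul ?mulf_neq0 ?polyXsubC_eq0 //.
  by rewrite size_mul ?polyXsubC_eq0 // !size_XsubC addnC.
- move: sgn; rewrite pq (hornerM q _ a) (hornerM q _ b) mulrACA pmulr_llt0 // mulr_gt0 //.
    exact: horner_conj_pair_gt0.
  by apply: horner_conj_pair_gt0; rewrite // -(ler_real (ltW ab)).
by exists r; rewrite // pq rootM qr.
Qed.

Lemma conj_polys_last_root (I : finType) (f : I -> {poly C}) a b i :
  (forall l, map_poly Num.conj (f l) = f l) -> a \is Num.real -> a < b ->
  (forall l, 0 < (f l).[b]) -> (f i).[a] < 0 ->
  exists2 t, a < t < b & (exists l, root (f l) t) /\ (forall l, 0 <= (f l).[t]).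
Proof.
move=> fc ar ab fb_gt0 fia_lt0.
have real_gt r : a < r -> r \is Num.real by move=> /ltW/ler_real <-.
have f0 l : f l != 0 by apply: contraTneq (fb_gt0 l) => ->; rewrite horner0 ltxx.
pose L := [seq r <- flatten [seq roots (f l) | l <- enum I] | a < r < b].
have mem_L r : (r \in L) = (a < r < b) && [exists l, root (f l) r].
  rewrite mem_filter; congr andb; apply/flatten_mapP/existsP => [[l _]|[l]].
    by rewrite mem_roots // => ?; exists l.
  by rewrite -mem_roots // => ?; exists l; rewrite ?mem_enum.
have [r1 r1ab r1i] : exists2 r, a < r < b & root (f i) r.
  by apply: conj_poly_ivt; rewrite ?pmulr_llt0.
have r1L : r1 \in L by rewrite mem_L r1ab; apply/existsP; exists i.
have [|t tL tmax] := @real_seq_max _ L r1.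
  apply/allP => r; rewrite inE mem_L.
  move=> /predU1P [->|/andP [/andP [ar1 _] _]]; last exact: real_gt.
  by case/andP: r1ab => /real_gt.
have {tL} : t \in L by move: tL; rewrite inE => /predU1P [->|].
rewrite mem_L => /andP [tab /existsP [l0 tl0]]; case/andP: (tab) => lt_at lt_tb.
exists t => //; split; first by exists l0.
move=> l; rewrite real_leNgt ?real0 ?horner_conj_real ?real_gt //; apply/negP => ftl.
have [r2 /andP [tr2 r2b] r2l] : exists2 r, t < r < b & root (f l) r.
  by apply: conj_poly_ivt; rewrite ?pmulr_llt0 ?real_gt.
have r2L : r2 \in L by rewrite mem_L (lt_trans lt_at tr2) r2b; apply/existsP; exists l.
have := tmax r2; rewrite inE r2L orbT => /(_ isT)/(lt_le_trans tr2).
by rewrite ltxx.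
Qed.

End ConjInvariantPolynomials.

Lemma scalemx_exprn (R : comPzRingType) n (b : R) (M : 'M[R]_n) k :
  (b *: M) ^+ k = b ^+ k *: M ^+ k.
Proof.
elim: k => [|k IH]; first by rewrite !expr0 scale1r.
by rewrite !exprS IH -!mulmxE -scalemxAr -scalemxAl scalerA mulrC.
Qed.

Section CharPoly.
Variables (C : numClosedFieldType) (n : nat).
Implicit Types (M : 'M[C]_n) (t z : C).

Lemma map_horner_char_poly_mx M t :
  map_mx (horner_eval t) (char_poly_mx M) = t%:M - M.
Proof.
apply/matrixP => i j; rewrite !mxE /= horner_evalE.
by rewrite hornerD hornerN hornerMn hornerX hornerC.
Qed.

Lemma horner_char_poly M t : (char_poly M).[t] = \det (t%:M - M).
Proof. by rewrite -horner_evalE -det_map_mx map_horner_char_poly_mx. Qed.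

Lemma horner_adj_char_poly_mx M t i j :
  ((\adj (char_poly_mx M)) i j).[t] = \adj (t%:M - M) i j.
Proof. by rewrite -map_horner_char_poly_mx -map_mx_adj [RHS]mxE. Qed.

Lemma char_poly_trmx M : char_poly M^T = char_poly M.
Proof.
rewrite /char_poly -det_tr; congr (\det _).
by apply/matrixP => i j; rewrite !mxE eq_sym.
Qed.

Lemma root_char_polyZ M b u : b != 0 ->
  root (char_poly (b *: M)) u = root (char_poly M) (u / b).
Proof.
move=> b0; rewrite /root !horner_char_poly.
have -> : u%:M - b *: M = b *: ((u / b)%:M - M).
  by rewrite scalerBr scale_scalar_mx mulrC divfK.
by rewrite detZ mulf_eq0 expf_eq0 (negPf b0) andbF.
Qed.

Lemma mem_roots_char_poly M z : (z \in roots (char_poly M)) = root (char_poly M) z.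
Proof. by rewrite mem_roots // monic_neq0 // char_poly_monic. Qed.

Lemma root_le_specrad M z : root (char_poly M) z -> `|z| <= specrad M.
Proof.
by rewrite -mem_roots_char_poly; apply: le_bigmaxr => x; apply: normr_real.
Qed.

Lemma specrad_lt M B : 0 < B ->
  (forall z, root (char_poly M) z -> `|z| < B) -> specrad M < B.
Proof.
by move=> B0 MB; apply: bigmaxr_lt => // z; rewrite mem_roots_char_poly; apply: MB.
Qed.

End CharPoly.

Section NonnegativeMatrix.
Variables (C : numClosedFieldType) (n : nat) (M : 'M[C]_n).
Hypothesis M_ge0 : forall i j, 0 <= M i j.

Lemma map_conj_nonneg_mx : map_mx Num.conj M = M.
Proof. by apply/matrixP => i j; rewrite mxE geC0_conj. Qed.

Lemma map_conj_char_poly : map_poly Num.conj (char_poly M) = char_poly M.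
Proof. by rewrite map_char_poly map_conj_nonneg_mx. Qed.

Lemma map_conj_adj_char_poly_mx i j :
  map_poly Num.conj ((\adj (char_poly_mx M)) i j) = (\adj (char_poly_mx M)) i j.
Proof.
have := map_mx_adj (map_poly Num.conj) (char_poly_mx M).
rewrite map_char_poly_mx map_conj_nonneg_mx => /(congr1 (fun A : 'M_n => A i j)).
by rewrite mxE.
Qed.

Lemma exprn_mx_ge0 m i j : 0 <= (M ^+ m) i j.
Proof.
elim: m i j => [|m IH] i j; first by rewrite expr0 mxE ler0n.
by rewrite exprS -mulmxE mxE sumr_ge0 // => l _; rewrite mulr_ge0.
Qed.

Lemma exprn_diag_le m i : M i i ^+ m <= (M ^+ m) i i.
Proof.
elim: m => [|m IH]; first by rewrite !expr0 mxE eqxx.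
rewrite exprS [M ^+ m.+1]exprS -mulmxE mxE (bigD1 i) //=.
rewrite ler_wpDr ?ler_wpM2l // sumr_ge0 // => l _.
by rewrite mulr_ge0 ?exprn_mx_ge0.
Qed.

(* Compare an eigenvector [x] with [p] at an index maximizing [|x i| / p i]. *)
Lemma root_char_poly_lt_subinvariant (p : 'I_n -> C) s :
  (forall i, 0 < p i) -> (forall i, \sum_j M i j * p j < s * p i) ->
  forall z, root (char_poly M) z -> `|z| < s.
Proof.
move=> p_gt0 Mp_lt z; rewrite -char_poly_trmx -eigenvalue_root_char.
move=> /eigenvalueP [v vM v0]; pose x i := v 0 i.
have Mx i : \sum_j M i j * x j = z * x i.
  have := congr1 (fun B : 'rV_n => B 0 i) vM; rewrite !mxE => <-.
  by apply: eq_bigr => j _; rewrite mxE mulrC.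
have [i0 xi0] : exists i, x i != 0.
  apply/existsP; apply: contraNT v0; rewrite negb_exists => /forallP x0.
  by apply/eqP/matrixP => a b; rewrite ord1 mxE; apply/eqP/negPn.
have [m mP] := @real_fin_argmax _ _ i0 (fun i => `|x i| / p i)
  (fun i => ltac:(by rewrite rpredM ?rpredV ?normr_real ?gtr0_real)).
set t := `|x m| / p m in mP.
have t_gt0 : 0 < t by apply: lt_le_trans (mP i0); rewrite divr_gt0 ?normr_gt0.
have xm : `|x m| = t * p m by rewrite /t mulfVK ?gt_eqF.
have zxm : `|z| * `|x m| <= t * \sum_j M m j * p j.
  rewrite -normrM -Mx mulr_sumr; apply: le_trans (ler_norm_sum _ _ _) _.
  apply: ler_sum => j _; rewrite normrM (ger0_norm (M_ge0 m j)) mulrCA.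
  by rewrite ler_wpM2l // -ler_pdivrMr ?mP.
have : `|z| * `|x m| < s * `|x m|.
  by apply: le_lt_trans zxm _; rewrite xm mulrCA ltr_pM2l.
by rewrite ltr_pM2r // xm mulr_gt0.
Qed.

End NonnegativeMatrix.

Lemma specrad_gt0 (C : numClosedFieldType) (n : nat) (M : 'M[C]_n) : (0 < n)%N ->
  (forall i j, 0 <= M i j) -> irreducible_mx M -> 0 < specrad M.
Proof.
case: n M => // n M _ M_ge0 M_irr.
have := roots_normalE (char_poly M); set rs := roots _ => cpE.
have [/hasP [z zs z0] | /hasPn all0] := boolP (has (fun z => z != 0) rs).
  have zr : root (char_poly M) z by rewrite -mem_roots_char_poly.
  by apply: lt_le_trans (root_le_specrad zr); rewrite normr_gt0.
have M_nil : M ^+ size rs = 0.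
  have := Cayley_Hamilton M; rewrite cpE (monicP (char_poly_monic M)) scale1r big_seq.
  rewrite (eq_bigr (fun=> 'X)) => [|z /all0]; last by move/negPn/eqP ->; rewrite subr0.
  by rewrite -big_seq big_const_seq count_predT iter_mulr_1 rmorphXn /= horner_mx_X.
have [[|k] [// _ Mk]] := M_irr ord0 ord0.
have := @exprn_diag_le _ _ (M ^+ k.+1) (exprn_mx_ge0 M_ge0 k.+1) (size rs) ord0.
rewrite -exprM mulnC exprM M_nil expr0n /= mxE => /(lt_le_trans (exprn_gt0 _ Mk)).
by rewrite ltxx.
Qed.

Lemma irreducible_mxZ (C : numDomainType) n (M : 'M[C]_n) b :
  0 < b -> irreducible_mx M -> irreducible_mx (b *: M).
Proof.
move=> b_gt0 M_irr i j; have [k [k_gt0 Mk]] := M_irr i j.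
by exists k; rewrite scalemx_exprn mxE mulr_gt0 ?exprn_gt0.
Qed.

Section Resolvent.
Variables (C : numClosedFieldType) (n : nat) (M : 'M[C]_n).
Hypothesis M_ge0 : forall i j, 0 <= M i j.

(* [(t - M) x = e_j], i.e. [x] is column [j] of [(t - M)^-1] when [t] is not
   an eigenvalue. *)
Definition is_resolvent_col j t (x : 'I_n -> C) :=
  forall k, t * x k = (k == j)%:R + \sum_l M k l * x l.

Hypothesis M_irr : irreducible_mx M.

(* If [x a = 0], row [a] of every power of [M] vanishes on the support of [x],
   which contains [j]; irreducibility forbids this. *)
Lemma resolvent_col_gt0 j t x :
  (forall k, 0 <= x k) -> is_resolvent_col j t x -> forall k, 0 < x k.
Proof.
move=> x_ge0 xE k; rewrite lt_def x_ge0 andbT; apply/negP => /negPn xk0.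
have Mx_ge0 a : 0 <= \sum_l M a l * x l by rewrite sumr_ge0 // => l _; rewrite mulr_ge0.
have xj0 : x j != 0.
  apply/eqP => xj0; have /eqP := xE j; rewrite xj0 mulr0 eqxx eq_sym.
  by rewrite paddr_eq0 ?ler01 // oner_eq0.
have M0 a b : x a = 0 -> x b != 0 -> M a b = 0.
  move=> xa0 xb0; have aj : (a == j) = false by apply: contraNF xj0 => /eqP <-; rewrite xa0.
  have /esym/eqP := xE a; rewrite xa0 mulr0 aj add0r psumr_eq0 => [/allP/(_ b)|l _].
    by rewrite mem_index_enum mulf_eq0 (negPf xb0) orbF => /(_ isT)/eqP.
  by rewrite mulr_ge0.
have Mm0 m a b : x a = 0 -> x b != 0 -> (M ^+ m.+1) a b = 0.
  elim: m a b => [|m IH] a b xa0 xb0; first by rewrite expr1 M0.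
  rewrite exprS -mulmxE mxE big1 // => l _.
  have [xl0 | xl0] := eqVneq (x l) 0; first by rewrite IH ?mulr0.
  by rewrite M0 ?mul0r.
have [[|m] [// _]] := M_irr k j.
by rewrite Mm0 ?ltxx //; apply/eqP/negPn.
Qed.

(* For [t] above the total mass of [M], a negative minimum of [x] would give
   [x_m S <= (M x)_m <= t x_m < x_m S], where [S] is that mass. *)
Lemma resolvent_col_ge0 j t x : \sum_k \sum_l M k l < t ->
  (forall k, x k \is Num.real) -> is_resolvent_col j t x -> forall k, 0 <= x k.
Proof.
move=> St x_real xE k0; have [m mP] := real_fin_argmin k0 x_real.
suff : 0 <= x m by move/le_trans; apply.
rewrite real_leNgt ?real0 //; apply/negP => xm_lt0.
have rowS : \sum_l M m l <= \sum_k \sum_l M k l.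
  rewrite [leRHS](bigD1 m) //= lerDl sumr_ge0 // => k _.
  by rewrite sumr_ge0.
have xm_le : x m * \sum_l M m l <= t * x m.
  rewrite xE mulr_sumr ler_wpDl ?ler0n // ler_sum // => l _.
  by rewrite mulrC ler_wpM2l.
have : x m * t < x m * \sum_k \sum_l M k l by rewrite ltr_nM2l.
move=> /lt_le_trans /(_ (le_trans (ler_wnM2l (ltW xm_lt0) rowS) xm_le)).
by rewrite mulrC ltxx.
Qed.

Lemma invmx_sub_resolvent_col j t : t%:M - M \in unitmx ->
  is_resolvent_col j t (fun l => invmx (t%:M - M) l j).
Proof.
move=> unitA l; have := congr1 (fun B : 'M_n => B l j) (mulmxV unitA).
by rewrite mulmxBl mul_scalar_mx !mxE => /eqP; rewrite subr_eq => /eqP ->.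
Qed.

(* Dividing by [det^2] rather than [det] makes the numerator a polynomial in
   [t] with the sign of the entry. *)
Definition resolvent_num j l : {poly C} := (\adj (char_poly_mx M)) l j * char_poly M.

Lemma invmx_subE t l j : \det (t%:M - M) != 0 ->
  invmx (t%:M - M) l j = (resolvent_num j l).[t] * (\det (t%:M - M) ^+ 2)^-1.
Proof.
move=> det0; rewrite /invmx unitmxE unitfE det0 mxE hornerM horner_adj_char_poly_mx.
by rewrite horner_char_poly expr2 invfM mulrA mulfK // mulrC.
Qed.

Lemma map_conj_resolvent_num j l :
  map_poly Num.conj (resolvent_num j l) = resolvent_num j l.
Proof. by rewrite rmorphM /= map_conj_adj_char_poly_mx ?map_conj_char_poly. Qed.

(* The columns of [(t - M)^-1] are positive for large [t], and as [t] decreases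
   to [1] they cannot leave the positive orthant without an entry vanishing at a
   real [t >= 1], i.e. without [t] being an eigenvalue. *)
Lemma invmx_one_sub_gt0 : (forall u, 1 <= u -> ~~ root (char_poly M) u) ->
  (1%:M - M) \in unitmx /\ forall k j, 0 < invmx (1%:M - M) k j.
Proof.
move=> no_root; pose A t := t%:M - M.
have det0 t : 1 <= t -> \det (A t) != 0 by rewrite -horner_char_poly; apply: no_root.
have unitA t : 1 <= t -> A t \in unitmx by move=> t1; rewrite unitmxE unitfE det0.
split=> [|k j]; first exact: unitA.
pose X t l := invmx (A t) l j.
have X_col t : 1 <= t -> is_resolvent_col j t (X t).
  by move=> t1; apply: invmx_sub_resolvent_col; apply: unitA.
have inv_det2_gt0 t : 1 <= t -> 0 < (\det (A t) ^+ 2)^-1.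
  move=> t1; rewrite invr_gt0 real_exprn_even_gt0 ?det0 ?orbT //.
  by rewrite -horner_char_poly horner_conj_real ?map_conj_char_poly ?ger1_real.
have XE t l : 1 <= t -> X t l = (resolvent_num j l).[t] * (\det (A t) ^+ 2)^-1.
  by move=> t1; apply: invmx_subE; apply: det0.
have X_real t l : 1 <= t -> X t l \is Num.real.
  move=> t1; rewrite XE //; apply: rpredM; last exact: gtr0_real (inv_det2_gt0 t t1).
  by rewrite horner_conj_real ?map_conj_resolvent_num ?ger1_real.
pose T := \sum_k \sum_l M k l + 2.
have lt1T : 1 < T by rewrite ltr_wpDl ?ltr1n //; do 2!(apply: sumr_ge0 => ? _).
have T1 := ltW lt1T.
have XT_gt0 l : 0 < X T l.
  apply: resolvent_col_gt0 (X_col T T1) l => //.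
  apply: resolvent_col_ge0 _ _ (X_col T T1) => [|q]; first by rewrite ltrDl.
  exact: X_real T1.
suff X1_ge0 l : 0 <= X 1 l by exact: resolvent_col_gt0 (X_col 1 (lexx 1)) k.
rewrite real_leNgt ?X_real ?real0 //; apply/negP => X1_lt0.
have [t /andP [lt1t _] [[l0 root_l0] num_ge0]] : exists2 t, 1 < t < T &
    (exists l, root (resolvent_num j l) t) /\ (forall l, 0 <= (resolvent_num j l).[t]).
  apply: (@conj_polys_last_root _ _ _ _ _ l (map_conj_resolvent_num j) (real1 _) lt1T).
    by move=> q; have := XT_gt0 q; rewrite XE // pmulr_lgt0 ?inv_det2_gt0.
  by move: X1_lt0; rewrite XE // pmulr_llt0 ?inv_det2_gt0.
have t1 := ltW lt1t.
have Xt_ge0 q : 0 <= X t q by rewrite XE // pmulr_lge0 ?inv_det2_gt0.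
have := resolvent_col_gt0 Xt_ge0 (X_col t t1) l0.
by rewrite XE // (eqP root_l0) mul0r ltxx.
Qed.

End Resolvent.

Section PolicyImprovement.
Variables (C : numClosedFieldType) (N : nat) (K : 'I_N -> nat).
Variables (R : forall i, 'I_(K i) -> 'I_N -> C) (b : forall i, 'I_(K i) -> C).
Hypothesis R_ge0 : forall i (k : 'I_(K i)) j, 0 <= R k j.
Hypothesis b_ge0 : forall i (k : 'I_(K i)), 0 <= b k.

Definition policy_mx (c : choice_t K) : 'M[C]_N := \matrix_(i, j) R (c i) j.
Definition policy_vec (c : choice_t K) : 'cV[C]_N := \col_i b (c i).

Hypothesis policy_unit : forall c, 1%:M - policy_mx c \in unitmx.
Hypothesis policy_inv_gt0 : forall c i j, 0 < invmx (1%:M - policy_mx c) i j.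

Definition policy_value (c : choice_t K) := invmx (1%:M - policy_mx c) *m policy_vec c.

Definition switch_choice (c : choice_t K) i (k : 'I_(K i)) : choice_t K :=
  [ffun l => dfwith (fun l => c l) k l].

Lemma one_sub_mulmx_entry (P : 'M[C]_N) (x : 'cV[C]_N) l :
  ((1%:M - P) *m x) l 0 = x l 0 - \sum_j P l j * x j 0.
Proof. by rewrite mulmxBl mul1mx !mxE. Qed.

Lemma policy_value_ge0 c i : 0 <= policy_value c i 0.
Proof.
rewrite mxE; apply: sumr_ge0 => j _.
by rewrite !mxE mulr_ge0 ?b_ge0 ?ltW ?policy_inv_gt0.
Qed.

Lemma policy_valueE c i :
  policy_value c i 0 = b (c i) + \sum_j R (c i) j * policy_value c j 0.
Proof.
have vE : policy_value c = policy_vec c + policy_mx c *m policy_value c.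
  apply/eqP; rewrite -subr_eq -[X in X - _]mul1mx -mulmxBl.
  by rewrite /policy_value mulmxA mulmxV ?mul1mx.
by rewrite {1}vE !mxE; congr (_ + _); apply: eq_bigr => j _; rewrite mxE.
Qed.

(* The values of [c] and of the switched choice [c'] differ by [(1 - P c')^-1 w],
   where [w] is supported by the switched row [i], on which it is positive. *)
Lemma policy_value_switch_gt c i (k : 'I_(K i)) :
  policy_value c i 0 < b k + \sum_j R k j * policy_value c j 0 ->
  \sum_l policy_value c l 0 < \sum_l policy_value (switch_choice c k) l 0.
Proof.
set p := policy_value c; set c' := switch_choice c k => p_lt.
have c'i : c' i = k by rewrite ffunE dfwith_in.
have c'l l : l != i -> c' l = c l by move=> li; rewrite ffunE dfwith_out // eq_sym.
pose w := policy_vec c' - (1%:M - policy_mx c') *m p.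
have wE l : w l 0 = b (c' l) + \sum_j R (c' l) j * p j 0 - p l 0.
  rewrite /w mxE [X in _ + X]mxE one_sub_mulmx_entry mxE opprB addrCA addrA.
  by rewrite [_ + b _]addrC; congr (_ + _ - _); apply: eq_bigr => j _; rewrite mxE.
have w0 l : l != i -> w l 0 = 0 by move=> li; rewrite wE c'l // -policy_valueE subrr.
have wi_gt0 : 0 < w i 0 by rewrite wE c'i subr_gt0.
have p'E : policy_value c' = p + invmx (1%:M - policy_mx c') *m w.
  by rewrite mulmxBr mulmxA mulVmx ?mul1mx // addrC subrK.
have p'_entry l :
    policy_value c' l 0 = p l 0 + invmx (1%:M - policy_mx c') l i * w i 0.
  rewrite p'E mxE [(_ *m w) _ _]mxE (bigD1 i) //= big1 ?addr0 // => q qi.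
  by rewrite w0 ?mulr0.
rewrite (eq_bigr _ (fun l _ => p'_entry l)) big_split /= ltrDl (bigD1 i) //=.
rewrite ltr_wpDr ?mulr_gt0 //; apply: sumr_ge0 => l _.
by rewrite mulr_ge0 ?ltW.
Qed.

Lemma policy_fixpoint (c0 : choice_t K) :
  exists p : 'I_N -> C, (forall j, 0 <= p j) /\
    forall i (k : 'I_(K i)), b k + \sum_j R k j * p j <= p i.
Proof.
have [|c c_max] := @real_fin_argmax _ _ c0 (fun c => \sum_l policy_value c l 0).
  by move=> c; rewrite rpred_sum // => l _; rewrite ger0_real ?policy_value_ge0.
exists (fun j => policy_value c j 0); split=> [j|i k]; first exact: policy_value_ge0.
have rhs_ge0 : 0 <= b k + \sum_j R k j * policy_value c j 0.
  by apply: addr_ge0 => //; apply: sumr_ge0 => j _; rewrite mulr_ge0 ?policy_value_ge0.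
rewrite real_leNgt ?ger0_real ?policy_value_ge0 //.
apply/negP => /policy_value_switch_gt /lt_le_trans /(_ (c_max _)).
by rewrite ltxx.
Qed.

End PolicyImprovement.

Lemma is_sup_open_interval (C : numFieldType) (S : C -> Prop) s : 0 < s ->
  (forall b, S b <-> 0 < b /\ b < s) -> is_sup S s.
Proof.
move=> s_gt0 SE; split=> [b /SE [_ /ltW] //|u u_ub].
have [mid_gt0 mid_lt] := midf_lt s_gt0; rewrite add0r in mid_gt0 mid_lt.
have u_gt0 : 0 < u := lt_le_trans mid_gt0 (u_ub _ (proj2 (SE _) (conj mid_gt0 mid_lt))).
rewrite real_leNgt ?gtr0_real //; apply/negP => u_lt.
have [u_lt_mid mid_lt_s] := midf_lt u_lt.
have := u_ub ((u + s) / 2) (proj2 (SE _) (conj (lt_trans u_gt0 u_lt_mid) mid_lt_s)).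
by move/(lt_le_trans u_lt_mid); rewrite ltxx.
Qed.

Section PowerControl.
Variables (C : numClosedFieldType) (N : nat) (K : 'I_N -> nat).
Variables (g : forall i : 'I_N, 'I_(K i) -> 'I_N -> C) (sigma2 : C) (mu : 'I_N -> C).
Hypothesis K_gt0 : forall i, (0 < K i)%N.
Hypothesis g_ge0 : forall i (k : 'I_(K i)) j, 0 <= g k j.
Hypothesis g_diag_gt0 : forall i (k : 'I_(K i)), 0 < g k i.
Hypothesis sigma2_gt0 : 0 < sigma2.
Hypothesis mu_gt0 : forall i, 0 < mu i.

(* Off-diagonal part [- a_i^k(mu)] of a constraint row, i.e. a row of [I - G]. *)
Definition interference i (k : 'I_(K i)) j : C :=
  if j == i then 0 else mu i * g k j / g k i.

Lemma interference_ge0 i (k : 'I_(K i)) j : 0 <= interference k j.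
Proof.
rewrite /interference; case: ifP => // _.
by rewrite !mulr_ge0 ?g_ge0 ?invr_ge0 ?ltW ?mu_gt0 ?g_diag_gt0.
Qed.

Lemma nvec_gt0 i (k : 'I_(K i)) : 0 < nvec g sigma2 mu k.
Proof. by rewrite /nvec divr_gt0 ?mulr_gt0. Qed.

Lemma one_sub_GmatE c : 1%:M - Gmat g mu c = \matrix_(i, j) interference (c i) j.
Proof.
apply/matrixP => i j; rewrite !mxE /arow /interference eq_sym.
by case: ifP => _; rewrite ?subrr // sub0r opprK.
Qed.

Lemma feasibleE beta p : feasible g sigma2 (fun i => beta * mu i) p <->
  forall i (k : 'I_(K i)),
    beta * nvec g sigma2 mu k + \sum_j beta * interference k j * p j <= p i.
Proof.
have rowE i (k : 'I_(K i)) : \sum_j arow g (fun i => beta * mu i) k j * p j =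
    p i - \sum_j beta * interference k j * p j.
  rewrite (bigD1 i) //= [X in _ - X](bigD1 i) //=.
  have -> : interference k i = 0 by rewrite /interference eqxx.
  rewrite mulr0 mul0r add0r /arow eqxx mul1r -sumrN; congr (_ + _).
  by apply: eq_bigr => j /negPf ji; rewrite /interference ji mulNr !mulrA.
have nE i (k : 'I_(K i)) :
    nvec g sigma2 (fun i => beta * mu i) k = beta * nvec g sigma2 mu k.
  by rewrite /nvec !mulrA.
by split=> feas i k; have := feas i k; rewrite rowE nE lerBrDr.
Qed.

Definition max_specrad := \big[@maxr C/0]_(c : choice_t K) specrad (1%:M - Gmat g mu c).

Lemma one_sub_Gmat_ge0 c i j : 0 <= (1%:M - Gmat g mu c) i j.
Proof. by rewrite one_sub_GmatE mxE interference_ge0. Qed.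

Lemma specrad_le_max c : specrad (1%:M - Gmat g mu c) <= max_specrad.
Proof.
apply: le_bigmaxr (mem_index_enum c) => {}c.
by rewrite bigmaxr_real // => z; apply: normr_real.
Qed.

Definition default_choice : choice_t K := [ffun i => Ordinal (K_gt0 i)].

Hypothesis N_gt0 : (0 < N)%N.
Hypothesis G_irr : forall c, irreducible_mx (1%:M - Gmat g mu c).

Lemma max_specrad_gt0 : 0 < max_specrad.
Proof.
apply: lt_le_trans (specrad_le_max default_choice).
by apply: specrad_gt0 => //; apply: one_sub_Gmat_ge0.
Qed.

Lemma beta_star_gt0 : 0 < beta_star g mu.
Proof. by rewrite divr_gt0 ?max_specrad_gt0. Qed.

Lemma feasible_lt_beta_star beta p : 0 < beta -> (forall j, 0 <= p j) ->
  feasible g sigma2 (fun i => beta * mu i) p -> beta < beta_star g mu.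
Proof.
move=> beta_gt0 p_ge0 /feasibleE feas.
have Fp_lt c i : \sum_j (1%:M - Gmat g mu c) i j * p j < beta^-1 * p i.
  rewrite -(ltr_pM2l beta_gt0) mulrA mulfV ?gt_eqF // mul1r mulr_sumr.
  apply: lt_le_trans (feas i (c i)).
  have -> : \sum_j beta * ((1%:M - Gmat g mu c) i j * p j) =
      \sum_j beta * interference (c i) j * p j.
    by apply: eq_bigr => j _; rewrite one_sub_GmatE mxE mulrA.
  by rewrite ltrDr mulr_gt0 ?nvec_gt0.
have p_gt0 i : 0 < p i.
  have Fp_ge0 : 0 <= \sum_j (1%:M - Gmat g mu default_choice) i j * p j.
    by apply: sumr_ge0 => j _; rewrite mulr_ge0 ?one_sub_Gmat_ge0.
  by have := le_lt_trans Fp_ge0 (Fp_lt default_choice i); rewrite pmulr_rgt0 ?invr_gt0.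
have specrad_lt_inv c : specrad (1%:M - Gmat g mu c) < beta^-1.
  apply: specrad_lt; first by rewrite invr_gt0.
  apply: (root_char_poly_lt_subinvariant _ p_gt0 (Fp_lt c)) => i j.
  exact: one_sub_Gmat_ge0.
have max_lt : max_specrad < beta^-1.
  by apply: bigmaxr_lt => [|c _]; rewrite ?invr_gt0 ?specrad_lt_inv.
rewrite /beta_star -/max_specrad div1r -(invrK beta) ltf_pV2 //.
all: by rewrite posrE ?invr_gt0 ?max_specrad_gt0.
Qed.

Lemma lt_beta_star_feasible beta : 0 < beta -> beta < beta_star g mu ->
  exists p : 'I_N -> C, (forall j, 0 <= p j) /\ feasible g sigma2 (fun i => beta * mu i) p.
Proof.
move=> beta_gt0 beta_lt.
have beta_max_lt1 : beta * max_specrad < 1.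
  by rewrite -ltr_pdivlMr ?max_specrad_gt0.
pose R i (k : 'I_(K i)) j := beta * interference k j.
have R_ge0 i (k : 'I_(K i)) j : 0 <= R i k j by rewrite /R mulr_ge0 ?interference_ge0 ?ltW.
have policyE c : policy_mx R c = beta *: (1%:M - Gmat g mu c).
  by apply/matrixP => i j; rewrite one_sub_GmatE !mxE.
have no_root c u : 1 <= u -> ~~ root (char_poly (beta *: (1%:M - Gmat g mu c))) u.
  move=> u1; rewrite root_char_polyZ ?gt_eqF //; apply/negP => /root_le_specrad.
  have u_gt0 : 0 < u := lt_le_trans ltr01 u1.
  rewrite ger0_norm ?divr_ge0 ?(ltW u_gt0) ?(ltW beta_gt0) //.
  move=> /le_trans/(_ (specrad_le_max c)).
  rewrite ler_pdivrMr // mulrC => /le_lt_trans/(_ beta_max_lt1)/(le_lt_trans u1).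
  by rewrite ltxx.
have scaled_ge0 c i j : 0 <= (beta *: (1%:M - Gmat g mu c)) i j.
  by rewrite mxE mulr_ge0 ?one_sub_Gmat_ge0 ?ltW.
have inv_gt0 c := invmx_one_sub_gt0 (@scaled_ge0 c)
  (irreducible_mxZ beta_gt0 (G_irr c)) (@no_root c).
have [|c|c|p [p_ge0 p_fix]] :=
  @policy_fixpoint _ _ _ R (fun i k => beta * nvec g sigma2 mu k) R_ge0 _ _ _ default_choice.
- by move=> i k; rewrite mulr_ge0 ?ltW ?nvec_gt0.
- by rewrite policyE; case: (inv_gt0 c).
- by rewrite policyE; case: (inv_gt0 c).
by exists p; split => //; apply/feasibleE.
Qed.

End PowerControl.

Theorem mainTheorem6 (C : numClosedFieldType) (N : nat) (K : 'I_N -> nat)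
  (g : forall i : 'I_N, 'I_(K i) -> 'I_N -> C) (sigma2 : C) (mu : 'I_N -> C) :
  (0 < N)%N ->
  (forall i, 0 < K i)%N ->
  (forall i (k : 'I_(K i)) j, 0 <= g i k j) ->
  (forall i (k : 'I_(K i)), 0 < g i k i) ->
  0 < sigma2 ->
  (forall i, 0 < mu i) ->
  (forall c : choice_t K, irreducible_mx (1%:M - Gmat g mu c)) ->
  (forall beta : C, 0 < beta ->
     ((exists p : 'I_N -> C, (forall j, 0 <= p j) /\
          feasible g sigma2 (fun i => beta * mu i) p)
      <-> beta < beta_star g mu))
  /\
  is_sup (fun beta : C => 0 < beta /\
            exists p : 'I_N -> C, (forall j, 0 <= p j) /\
              feasible g sigma2 (fun i => beta * mu i) p)
         (beta_star g mu).
Proof.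
move=> N_gt0 K_gt0 g_ge0 g_diag_gt0 sigma2_gt0 mu_gt0 G_irr.
have feasible_iff beta : 0 < beta ->
    (exists p : 'I_N -> C, (forall j, 0 <= p j) /\
       feasible g sigma2 (fun i => beta * mu i) p) <-> beta < beta_star g mu.
  move=> beta_gt0; split=> [[p [p_ge0]]|]; first exact: feasible_lt_beta_star.
  exact: lt_beta_star_feasible.
split=> //; apply: is_sup_open_interval => [|beta]; first exact: beta_star_gt0.
by split=> -[beta_gt0 /(feasible_iff _ beta_gt0)].
Qed.
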